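(* Let $\Omega_2=\mathbb{R}\times\mathbb{R}$ (variables $(x,t)$) and let $\varepsilon\in(0,1)$. Define $w_\varepsilon:\Omega_2\to\mathbb{R}$ by $$w_\varepsilon(x,t)=\sum_{k=1}^\infty e^{-2^{(1+\varepsilon)k}}e^{-2^k x}\sin\big(2^{2k+1}t-2^k x\big).$$ Then $w_\varepsilon\in C^\infty(\Omega_2)$ and $w_\varepsilon$ satisfies the heat equation $\partial_t w_\varepsilon-\partial_x^2 w_\varepsilon=0$ on $\Omega_2$. For every fixed $x_0\in\mathbb{R}$, the function $t\mapsto w_\varepsilon(x_0,t)$ is not real analytic at any point $t_0\in\mathbb{R}$. Moreover, there exist positive constants $A_1,A_2$ depending only on $\varepsilon$ such that $$\sup_{x,t\in\mathbb{R}}|w_\varepsilon(x,t)|\exp\!\big(-A_2|x|^{1+\frac1\varepsilon}\big)\le A_1.$$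
   Context: A function of $t$ is real analytic at $t_0$ if its Taylor series at $t_0$ has positive radius of convergence and converges to the function on a neighborhood of $t_0$. *)

From Stdlib Require Import Reals Lra List.
From Coquelicot Require Import Coquelicot.
Open Scope R_scope.

Definition dx (f : R -> R -> R) : R -> R -> R :=
  fun x t => Derive (fun y => f y t) x.
Definition dt (f : R -> R -> R) : R -> R -> R :=
  fun x t => Derive (fun s => f x s) t.

(* iterated partial derivative: true = d/dx, false = d/dt, applied right-to-left *)
Fixpoint pderiv (l : list bool) (f : R -> R -> R) : R -> R -> R :=
  match l with
  | nil => f
  | b :: l' => if b then dx (pderiv l' f) else dt (pderiv l' f)
  end.

Definition smooth2 (f : R -> R -> R) : Prop :=
  forall l : list bool,
    (forall x t, ex_derive (fun y => pderiv l f y t) x) /\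
    (forall x t, ex_derive (fun s => pderiv l f x s) t) /\
    (forall x t, continuous (fun p : R * R => pderiv l f (fst p) (snd p)) (x, t)).

Definition real_analytic_at (f : R -> R) (t0 : R) : Prop :=
  (forall n, ex_derive_n f n t0) /\
  exists r, 0 < r /\
    forall t, Rabs (t - t0) < r ->
      is_series (fun n => Derive_n f n t0 / INR (Factorial.fact n) * (t - t0) ^ n) (f t).

(* |x|^p with the usual convention 0^p = 0 for p > 0 *)
Definition abspow (x p : R) : R :=
  if Req_EM_T x 0 then 0 else Rpower (Rabs x) p.

Definition w_term (eps x t : R) (k : nat) : R :=
  exp (- Rpower 2 ((1 + eps) * INR k)) * exp (- (2 ^ k) * x)
  * sin (2 ^ (2 * k + 1) * t - 2 ^ k * x).

Definition w_eps (eps : R) : R -> R -> R :=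
  fun x t => Series (fun n => w_term eps x t (S n)).

From Stdlib Require Import Reals Lra Lia Factorial FunctionalExtensionality ZArith.
From Coquelicot Require Import Coquelicot.
Open Scope R_scope.

(** Each term is a "wave" [C_k exp(-2^k x) sin(2^(2k+1) t - 2^k x + ph)], and
    d/dx, d/dt map waves to waves: they multiply the amplitude by
    [-sqrt 2 2^k], resp. [2^(2k+1)], and shift the phase by [pi/4], resp.
    [pi/2].  Amplitudes bounded by [4^(N(k+1)) exp(-2^((1+eps)k))]
    ("admissible") form a class stable under both operations whose wave
    series converge locally uniformly, so term-by-term differentiation shows
    that every iterated partial derivative of [w_eps] is again an admissible
    wave series; smoothness follows, and the heat equation holds amplitude by
    amplitude since [(-sqrt 2 2^k)^2 = 2^(2k+1)].  The growth bound is the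
    Young-type splitting [2^k|x| <= 2^((1+eps)k)/2 + 2^(1/eps)|x|^(1+1/eps)].
    For non-analyticity, shifting time by half the period of the [K]-th wave
    cancels the higher waves, reverses the [K]-th one and leaves finitely many
    lower ones; for a suitable large [K] and derivative order [n] this forces
    an oscillation of the [n]-th time derivative incompatible with the Cauchy
    estimates that analyticity would give (this uses [eps < 1]). *)

Lemma pow2_ge_INR (k : nat) : INR k <= 2 ^ k.
Proof.
  induction k as [|k IH]; [simpl; lra|].
  rewrite S_INR. simpl. assert (1 <= 2 ^ k) by (apply pow_R1_Rle; lra). lra.
Qed.

Lemma exp_le_mono (a b : R) : a <= b -> exp a <= exp b.
Proof.
  intro H. destruct (Req_dec a b) as [E|E]; [rewrite E; lra|].
  left; apply exp_increasing; lra.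
Qed.

Lemma exp_INR_mult (k : nat) (y : R) : exp (INR k * y) = exp y ^ k.
Proof.
  induction k as [|k IH]; [simpl; rewrite Rmult_0_l; apply exp_0|].
  rewrite S_INR, Rmult_plus_distr_r, Rmult_1_l, exp_plus, IH. simpl. ring.
Qed.

Lemma pow2_exp (k : nat) : 2 ^ k = exp (INR k * ln 2).
Proof. rewrite <- Rpower_pow by lra. reflexivity. Qed.

(** [2^((1+eps)k) = 2^k * 2^(eps k)]: the super-exponential decay rate of the
    coefficients of [w_eps] beats every exponential [2^k * const]. *)
Lemma Rpower2_split (eps : R) (k : nat) :
  Rpower 2 ((1 + eps) * INR k) = 2 ^ k * exp (eps * INR k * ln 2).
Proof.
  replace ((1 + eps) * INR k) with (INR k + eps * INR k) by ring.
  rewrite Rpower_plus, Rpower_pow by lra. reflexivity.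
Qed.

Lemma nat_ceil (x : R) : 0 <= x -> exists n : nat, x <= INR n <= x + 1.
Proof.
  intro Hx. destruct (archimed x) as [H1 H2].
  assert (Hz : (0 <= up x)%Z) by (apply le_IZR; lra).
  exists (Z.to_nat (up x)). rewrite INR_IZR_INZ, Z2Nat.id by auto. lra.
Qed.

Lemma sin_choice (th : R) : 1 / 2 <= Rabs (sin th) \/ 1 / 2 <= Rabs (sin (th + PI / 2)).
Proof.
  rewrite sin_plus, sin_PI2, cos_PI2, Rmult_0_r, Rmult_1_r, Rplus_0_l.
  destruct (Rle_dec (1/2) (Rabs (sin th))) as [H|H]; [left; auto|].
  destruct (Rle_dec (1/2) (Rabs (cos th))) as [H'|H']; [right; auto|].
  exfalso. assert (E := sin2_cos2 th). unfold Rsqr in E.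
  rewrite <- (Rabs_pos_eq (sin th * sin th)), <- (Rabs_pos_eq (cos th * cos th)),
    !Rabs_mult in E by nra.
  assert (P1 := Rabs_pos (sin th)). assert (P2 := Rabs_pos (cos th)). nra.
Qed.

Lemma phase_point (b c t0 : R) : 0 < b ->
  exists t, t0 <= t <= t0 + PI / (2 * b) /\ 1 / 2 <= Rabs (sin (b * t + c)).
Proof.
  intro Hb.
  assert (Hq : 0 < PI / (2 * b)) by (apply Rdiv_lt_0_compat; [apply PI_RGT_0 | lra]).
  destruct (sin_choice (b * t0 + c)) as [Hc|Hc].
  - exists t0. split; [lra | exact Hc].
  - exists (t0 + PI / (2 * b)). split; [lra|].
    replace (b * (t0 + PI / (2 * b)) + c) with (b * t0 + c + PI / 2) by (field; lra).
    exact Hc.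
Qed.

Lemma fact_pos (n : nat) : 0 < INR (fact n).
Proof. apply lt_0_INR, lt_O_fact. Qed.

(** The crude bound [n! <= n^n], enough against the super-exponential waves. *)
Lemma fact_le_pow (n : nat) : INR (fact n) <= INR n ^ n.
Proof.
  induction n as [|n IH]; [simpl; lra|].
  rewrite fact_simpl, mult_INR, <- tech_pow_Rmult.
  apply Rmult_le_compat_l; [apply pos_INR|].
  apply Rle_trans with (INR n ^ n); auto.
  apply pow_incr. split; [apply pos_INR | apply le_INR; lia].
Qed.

Lemma binom_bound (m n : nat) :
  INR (fact (m + n)) <= 2 ^ (m + n) * INR (fact m) * INR (fact n).
Proof.
  remember (m + n)%nat as s eqn:Hs. revert m n Hs.
  induction s as [|s IHs]; intros m n Hs; rewrite Hs.
  - assert (m = 0%nat) by lia. assert (n = 0%nat) by lia. subst. simpl. lra.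
  - destruct m as [|m].
    + simpl. assert (1 <= 2 ^ n) by (apply pow_R1_Rle; lra).
      assert (Hf0 := fact_pos n). nra.
    + destruct n as [|n].
      * rewrite Nat.add_0_r. simpl (fact 0).
        assert (1 <= 2 ^ S m) by (apply pow_R1_Rle; lra).
        assert (Hf0 := fact_pos (S m)). simpl INR at 3. nra.
      * assert (H1 := IHs m (S n) ltac:(lia)).
        assert (H2 := IHs (S m) n ltac:(lia)).
        replace (S m + S n)%nat with (S (m + S n)) by lia.
        assert (Es : s = (m + S n)%nat) by lia. rewrite Es in H1, H2.
        rewrite fact_simpl, mult_INR, S_INR, plus_INR, S_INR.
        rewrite (fact_simpl m), (fact_simpl n), !mult_INR, !S_INR.
        rewrite (fact_simpl n), mult_INR, S_INR in H1.
        rewrite (fact_simpl m), mult_INR, S_INR in H2.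
        set (F := INR (fact (m + S n))) in *.
        set (P := 2 ^ (m + S n)) in *.
        set (a := INR (fact m)) in *. set (b := INR (fact n)) in *.
        replace (2 ^ S (m + S n)) with (2 * P) by (unfold P; simpl; ring).
        assert (0 <= INR m) by apply pos_INR. assert (0 <= INR n) by apply pos_INR.
        assert ((INR m + 1) * F <= (INR m + 1) * (P * a * ((INR n + 1) * b)))
          by (apply Rmult_le_compat_l; lra).
        assert ((INR n + 1) * F <= (INR n + 1) * (P * ((INR m + 1) * a) * b))
          by (apply Rmult_le_compat_l; lra).
        nra.
Qed.

Lemma ex_series_Rle (a b : nat -> R) :
  (forall n, Rabs (a n) <= b n) -> ex_series b -> ex_series a.
Proof. exact (@ex_series_le R_AbsRing R_CompleteNormedModule a b). Qed.

Lemma ex_series_Rscal (c : R) (a : nat -> R) :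
  ex_series a -> ex_series (fun n => c * a n).
Proof. exact (@ex_series_scal_l R_AbsRing R_NormedModule c a). Qed.

Lemma Series_abs_le (u M : nat -> R) :
  (forall k, Rabs (u k) <= M k) -> ex_series M -> Rabs (Series u) <= Series M.
Proof.
  intros H1 H2. eapply Rle_trans; [apply Series_Rabs|].
  - apply (ex_series_Rle _ M); [intro n; rewrite Rabs_Rabsolu|]; auto.
  - apply Series_le; auto. intro n; split; [apply Rabs_pos|auto].
Qed.

Lemma tail_bound (u M : nat -> R) (n : nat) :
  (forall k, Rabs (u k) <= M k) -> ex_series M ->
  Rabs (Series u - sum_f_R0 u n) <= Series M - sum_f_R0 M n.
Proof.
  intros H1 H2.
  assert (Hu : ex_series u) by (apply (ex_series_Rle _ M); auto).
  rewrite (Series_incr_n u (S n)), (Series_incr_n M (S n)) by (lia || auto).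
  simpl pred. rewrite !Rplus_minus_l.
  apply Series_abs_le; auto. apply (ex_series_incr_n M (S n)); auto.
Qed.

Lemma series_Un_cv (a : nat -> R) : ex_series a -> Un_cv (sum_f_R0 a) (Series a).
Proof. intro H. apply is_series_Reals, Series_correct, H. Qed.

Lemma sum_deriv (u u' : nat -> R -> R) (y : R) (n : nat) :
  (forall k, derivable_pt_lim (u k) y (u' k y)) ->
  derivable_pt_lim (fun z => sum_f_R0 (fun k => u k z) n) y (sum_f_R0 (fun k => u' k y) n).
Proof.
  intro H. induction n as [|n IH]; simpl; [apply H|].
  apply (derivable_pt_lim_plus (fun z => sum_f_R0 (fun k => u k z) n) (u (S n))); auto.
Qed.

Lemma series_deriv (u u' : nat -> R -> R) (M : nat -> R) (x0 r : R) :
  0 < r ->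
  (forall k y, Rabs (y - x0) < r -> derivable_pt_lim (u k) y (u' k y)) ->
  (forall k y, Rabs (y - x0) < r -> Rabs (u' k y) <= M k) -> ex_series M ->
  (forall y, Rabs (y - x0) < r -> ex_series (fun k => u k y)) ->
  derivable_pt_lim (fun y => Series (fun k => u k y)) x0 (Series (fun k => u' k x0)).
Proof.
  intros Hr Hd HM HMs Hs.
  apply (CVU_derivable (fun n y => sum_f_R0 (fun k => u k y) n)
                       (fun n y => sum_f_R0 (fun k => u' k y) n)
                       (fun y => Series (fun k => u k y))
                       (fun y => Series (fun k => u' k y)) x0 (mkposreal r Hr)).
  - intros e He. destruct (series_Un_cv M HMs e He) as [N HN].
    exists N. intros n y Hn Hy.
    eapply Rle_lt_trans; [apply tail_bound; [intro k; apply HM, Hy | exact HMs]|].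
    specialize (HN n Hn). unfold Rdist in HN. rewrite Rabs_minus_sym in HN.
    eapply Rle_lt_trans; [apply Rle_abs | exact HN].
  - intros y Hy. apply series_Un_cv, Hs, Hy.
  - intros n y Hy. apply sum_deriv. intro k. apply Hd, Hy.
  - unfold Boule. simpl. rewrite Rminus_diag, Rabs_R0. exact Hr.
Qed.

Lemma Rball_eq (x y e : R) : ball x e y <-> Rabs (y - x) < e.
Proof. unfold ball; simpl; unfold AbsRing_ball, abs, minus, plus, opp; simpl. tauto. Qed.

Lemma between_abs (a b z : R) : Rmin a b <= z <= Rmax a b -> Rabs (z - a) <= Rabs (b - a).
Proof.
  unfold Rmin, Rmax. intros Hz. destruct (Rle_dec a b);
  unfold Rabs; destruct (Rcase_abs (z - a)); destruct (Rcase_abs (b - a)); lra.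
Qed.

Lemma mvt_lipschitz (f df : R -> R) (a b B : R) :
  (forall z, derivable_pt_lim f z (df z)) ->
  (forall z, Rmin a b <= z <= Rmax a b -> Rabs (df z) <= B) ->
  Rabs (f b - f a) <= B * Rabs (b - a).
Proof.
  intros Hd HB.
  destruct (MVT_gen f a b df) as [c [Hc Heq]].
  - intros z _. apply is_derive_Reals, Hd.
  - intros z _. apply derivable_continuous_pt. exists (df z). apply Hd.
  - rewrite Heq, Rabs_mult. apply Rmult_le_compat_r; [apply Rabs_pos | apply HB, Hc].
Qed.

(** * Cauchy estimates for real analytic functions *)

(** If [|a_n| rho^n <= M], the [n]-th derivative of [sum a_k y^k] on
    [|y| <= rho/4] is at most [2 M n! (2/rho)^n]: the binomial bound turns the
    derived series into a geometric series of ratio [1/2]. *)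
Lemma PSeries_derive_n_bound (a : nat -> R) (rho M : R) (n : nat) (y : R) :
  0 < rho -> (forall k, Rabs (a k * rho ^ k) <= M) -> Rabs y <= rho / 4 ->
  Rabs (Derive_n (PSeries a) n y) <= 2 * M * INR (fact n) * (2 / rho) ^ n.
Proof.
  intros Hrho HM Hy.
  assert (HCV : Rbar_le rho (CV_radius a))
    by (apply (proj1 (CV_radius_bounded a)); exists M; exact HM).
  rewrite Derive_n_PSeries by (eapply Rbar_lt_le_trans; [|exact HCV]; simpl; lra).
  unfold PSeries.
  eapply Rle_trans.
  { apply (Series_abs_le _ (fun m => (M * INR (fact n) * (2 / rho) ^ n) * (/ 2) ^ m)).
    - intro m. unfold PS_derive_n.
      assert (Hb := binom_bound m n).
      assert (Hfm := fact_pos m). assert (Hfn := fact_pos n).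
      assert (Ha : Rabs (a (m + n)%nat) <= M / rho ^ (m + n)).
      { assert (H := HM (m + n)%nat).
        rewrite Rabs_mult, (Rabs_pos_eq (rho ^ (m + n))) in H by (apply pow_le; lra).
        assert (0 < rho ^ (m + n)) by (apply pow_lt; lra).
        apply (Rmult_le_reg_r (rho ^ (m + n))); auto. field_simplify; lra. }
      assert (Hym : Rabs (y ^ m) <= (rho / 4) ^ m).
      { rewrite <- RPow_abs. apply pow_incr. split; [apply Rabs_pos|exact Hy]. }
      rewrite !Rabs_mult.
      rewrite (Rabs_pos_eq (INR (fact (m + n)) / INR (fact m)))
        by (apply Rdiv_le_0_compat; [apply pos_INR|auto]).
      apply Rle_trans with ((2 ^ (m + n) * INR (fact n)) * (M / rho ^ (m + n)) * (rho / 4) ^ m).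
      + apply Rmult_le_compat; try (apply Rmult_le_pos); try apply Rabs_pos;
          try (apply Rdiv_le_0_compat; [apply pos_INR|auto]); auto.
        apply Rmult_le_compat; try apply Rabs_pos; auto.
        apply Rdiv_le_0_compat; [apply pos_INR|auto].
        apply (Rmult_le_reg_r (INR (fact m))); auto.
        field_simplify; lra.
      + right. rewrite !pow_add. unfold Rdiv. rewrite !Rpow_mult_distr, !pow_inv.
        replace (4 ^ m) with (2 ^ m * 2 ^ m) by (rewrite <- Rpow_mult_distr; f_equal; ring).
        assert (0 < 2 ^ m) by (apply pow_lt; lra). assert (0 < rho ^ m) by (apply pow_lt; lra).
        assert (0 < rho ^ n) by (apply pow_lt; lra).
        field. repeat split; lra.
    - apply ex_series_Rscal, ex_series_geom. rewrite Rabs_pos_eq; lra. }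
  rewrite (Series_scal_l _ (fun m => (/ 2) ^ m)), (is_series_unique _ _ (is_series_geom (/ 2) ltac:(rewrite Rabs_pos_eq; lra))).
  right. field.
Qed.

Lemma analytic_deriv_bound (f : R -> R) (t0 : R) : real_analytic_at f t0 ->
  exists rho M, 0 < rho /\ 0 <= M /\ forall n s, Rabs (s - t0) <= rho / 4 ->
    Rabs (Derive_n f n s) <= 2 * M * INR (fact n) * (2 / rho) ^ n.
Proof.
  intros [_ [r [Hr Hser]]].
  set (a := fun n => Derive_n f n t0 / INR (fact n)).
  set (rho := r / 2).
  assert (Hrho : 0 < rho) by (unfold rho; lra).
  (* the Taylor series converges at [t0 + rho], so its terms there are bounded *)
  assert (Hlim : is_lim_seq (fun n => a n * rho ^ n) 0).
  { apply ex_series_lim_0. exists (f (t0 + rho)).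
    assert (H := Hser (t0 + rho)). replace (t0 + rho - t0) with rho in H by ring.
    apply H. rewrite Rabs_pos_eq; unfold rho; lra. }
  destruct (@filterlim_bounded R_AbsRing R_NormedModule (fun n => a n * rho ^ n))
    as [M HM]; [exists 0; exact Hlim|].
  assert (HM' : forall n, Rabs (a n * rho ^ n) <= M) by exact HM.
  exists rho, M. split; [auto|split; [eapply Rle_trans; [apply Rabs_pos|apply (HM' 0%nat)]|]].
  intros n s Hs.
  (* near [s], [f] coincides with the power series centred at [t0] *)
  assert (E : Derive_n f n s = Derive_n (fun u => PSeries a (u + - t0)) n s).
  { apply Derive_n_ext_loc. exists (mkposreal (rho / 2) ltac:(lra)). intros u Hu.
    assert (Hu' : Rabs (u - s) < rho / 2) by (apply Rball_eq; exact Hu). symmetry. apply is_series_unique, Hser.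
    assert (Rabs (u - t0) <= Rabs (u - s) + Rabs (s - t0))
      by (replace (u - t0) with ((u - s) + (s - t0)) by ring; apply Rabs_triang).
    unfold rho in *. lra. }
  rewrite E, Derive_n_comp_trans.
  apply PSeries_derive_n_bound; auto.
Qed.

(** A function of two variables with everywhere-existing partial derivatives,
    bounded near [(x, t)], is jointly continuous at [(x, t)]: move first in
    [x], then in [t], and use the mean value theorem on each leg. *)
Lemma continuous_of_bounded_partials (f fx ft : R -> R -> R) (x t B1 B2 : R) :
  (forall y s, derivable_pt_lim (fun z => f z s) y (fx y s)) ->
  (forall y s, derivable_pt_lim (fun z => f y z) s (ft y s)) ->
  (forall y s, Rabs (y - x) <= 1 -> Rabs (fx y s) <= B1) ->
  (forall s, Rabs (ft x s) <= B2) ->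
  continuous (fun p : R * R => f (fst p) (snd p)) (x, t).
Proof.
  intros Hfx Hft HB1 HB2.
  assert (HB1p : 0 <= B1) by (eapply Rle_trans; [apply Rabs_pos|apply (HB1 x 0)];
                              rewrite Rminus_diag, Rabs_R0; lra).
  assert (HB2p : 0 <= B2) by (eapply Rle_trans; [apply Rabs_pos|apply (HB2 0)]).
  apply filterlim_locally. intros e.
  set (d := Rmin 1 (e / (B1 + B2 + 1))).
  assert (Hd : 0 < d)
    by (apply Rmin_glb_lt; [lra | apply Rdiv_lt_0_compat; [apply cond_pos | lra]]).
  assert (Hd1 : d <= 1) by apply Rmin_l.
  assert (Hde : d * (B1 + B2 + 1) <= e).
  { apply Rle_trans with (e / (B1 + B2 + 1) * (B1 + B2 + 1));
      [apply Rmult_le_compat_r; [lra | apply Rmin_r] | right; field; lra]. }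
  exists (mkposreal d Hd). intros [y s] [Hy Hs]. simpl in Hy, Hs |- *.
  apply Rball_eq.
  assert (Hy' : Rabs (y - x) < d) by (apply Rball_eq; exact Hy).
  assert (Hs' : Rabs (s - t) < d) by (apply Rball_eq; exact Hs). clear Hy Hs.
  assert (Lx : Rabs (f y s - f x s) <= B1 * Rabs (y - x)).
  { apply (mvt_lipschitz (fun z => f z s) (fun z => fx z s)); [intro z; apply Hfx|].
    intros z Hz. apply HB1. assert (Rabs (z - x) <= Rabs (y - x)) by (apply between_abs, Hz).
    lra. }
  assert (Lt : Rabs (f x s - f x t) <= B2 * Rabs (s - t))
    by (apply (mvt_lipschitz (fun z => f x z) (fun z => ft x z)); auto).
  replace (f y s - f x t) with ((f y s - f x s) + (f x s - f x t)) by ring.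
  eapply Rle_lt_trans; [apply Rabs_triang|].
  assert (B1 * Rabs (y - x) <= B1 * d) by (apply Rmult_le_compat_l; lra).
  assert (B2 * Rabs (s - t) <= B2 * d) by (apply Rmult_le_compat_l; lra).
  nra.
Qed.

(** * A family of phase-shifted lacunary series *)

Definition coef (eps : R) (k : nat) : R := exp (- Rpower 2 ((1 + eps) * INR k)).

(** The [k]-th wave with amplitude sequence [C] and phase shift [ph]; every
    partial derivative of such a wave is again a wave. *)
Definition wave (C : nat -> R) (ph : R) (k : nat) (x t : R) : R :=
  C k * exp (- (2 ^ k) * x) * sin (2 ^ (2 * k + 1) * t - 2 ^ k * x + ph).

Definition wave_series (C : nat -> R) (ph : R) (x t : R) : R :=
  Series (fun n => wave C ph (S n) x t).

(** Amplitude changes produced by [d/dx] (with phase shift [pi/4]) and by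
    [d/dt] (with phase shift [pi/2]). *)
Definition coef_dx (C : nat -> R) : nat -> R := fun j => C j * (- (sqrt 2 * 2 ^ j)).
Definition coef_dt (C : nat -> R) : nat -> R := fun j => C j * 2 ^ (2 * j + 1).

Lemma w_eps_wave_series (eps : R) : w_eps eps = wave_series (coef eps) 0.
Proof.
  extensionality x. extensionality t. unfold w_eps, wave_series. apply Series_ext.
  intro n. unfold w_term, wave, coef. rewrite Rplus_0_r. reflexivity.
Qed.

Lemma wave_dx (C : nat -> R) (ph : R) (k : nat) (x t : R) :
  derivable_pt_lim (fun y => wave C ph k y t) x (wave (coef_dx C) (ph + PI / 4) k x t).
Proof.
  apply is_derive_Reals. unfold wave, coef_dx.
  auto_derive; auto.
  replace (k + (k + 0) + 1)%nat with (2 * k + 1)%nat by lia.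
  replace (2 ^ (2 * k + 1) * t - 2 ^ k * x + (ph + PI / 4))
    with ((2 ^ (2 * k + 1) * t + - (2 ^ k * x) + ph) + PI / 4) by ring.
  rewrite (sin_plus _ (PI / 4)), cos_PI4, sin_PI4.
  assert (sqrt 2 * sqrt 2 = 2) by (apply sqrt_sqrt; lra).
  assert (0 < sqrt 2) by (apply sqrt_lt_R0; lra).
  field_simplify; [|lra]. field. lra.
Qed.

Lemma wave_dt (C : nat -> R) (ph : R) (k : nat) (x t : R) :
  derivable_pt_lim (fun s => wave C ph k x s) t (wave (coef_dt C) (ph + PI / 2) k x t).
Proof.
  apply is_derive_Reals. unfold wave, coef_dt.
  auto_derive; auto.
  replace (k + (k + 0) + 1)%nat with (2 * k + 1)%nat by lia.
  replace (2 ^ (2 * k + 1) * t - 2 ^ k * x + (ph + PI / 2))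
    with ((2 ^ (2 * k + 1) * t + - (2 ^ k * x) + ph) + PI / 2) by ring.
  rewrite (sin_plus _ (PI / 2)), cos_PI2, sin_PI2. ring.
Qed.

Lemma wave_bound (C : nat -> R) (ph : R) (k : nat) (x t R0 : R) : Rabs x <= R0 ->
  Rabs (wave C ph k x t) <= Rabs (C k) * exp (2 ^ k * R0).
Proof.
  intro Hx. unfold wave. rewrite !Rabs_mult.
  rewrite (Rabs_pos_eq (exp _)) by (left; apply exp_pos).
  rewrite Rmult_assoc. apply Rmult_le_compat_l; [apply Rabs_pos|].
  rewrite <- (Rmult_1_r (exp (2 ^ k * R0))).
  apply Rmult_le_compat; [left; apply exp_pos | apply Rabs_pos | | apply Rabs_le, SIN_bound].
  apply exp_le_mono.
  assert (0 < 2 ^ k) by (apply pow_lt; lra).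
  assert (- x <= R0) by (rewrite <- Rabs_Ropp in Hx; eapply Rle_trans; [apply Rle_abs|exact Hx]).
  nra.
Qed.

Section AdmissibleAmplitudes.

Variable eps : R.
Hypothesis eps_pos : 0 < eps.

(** Amplitudes dominated by [coef eps] up to a factor [4^(N(k+1))]; this class
    contains [coef eps] and is stable under [coef_dx] and [coef_dt]. *)
Definition admissible (C : nat -> R) : Prop :=
  exists N : nat, forall k, Rabs (C k) <= 4 ^ (N * (k + 1)) * coef eps k.

Lemma coef_exponent_bound (L R0 : R) : 0 <= L -> 0 <= R0 ->
  exists K : nat, forall m, (K <= m)%nat ->
    INR m * L + 2 ^ m * R0 <= Rpower 2 ((1 + eps) * INR m).
Proof.
  intros HL HR.
  assert (Hl2 : 0 < ln 2) by (rewrite <- ln_1; apply ln_increasing; lra).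
  destruct (INR_archimed (eps * ln 2) (R0 + L + 1)) as [K HK];
    [apply Rmult_lt_0_compat; lra|].
  exists K. intros m Hm. apply le_INR in Hm.
  rewrite Rpower2_split.
  assert (E1 : 1 + eps * INR m * ln 2 <= exp (eps * INR m * ln 2)) by apply exp_ineq1_le.
  assert (E2 : eps * INR K * ln 2 <= eps * INR m * ln 2)
    by (apply Rmult_le_compat_r; [lra | apply Rmult_le_compat_l; lra]).
  assert (E3 : INR m <= 2 ^ m) by apply pow2_ge_INR.
  assert (E4 : 0 < 2 ^ m) by (apply pow_lt; lra).
  assert (2 ^ m * (1 + R0 + L + 1) <= 2 ^ m * exp (eps * INR m * ln 2))
    by (apply Rmult_le_compat_l; lra).
  nra.
Qed.

Lemma coef_decay (N : nat) (R0 : R) : 0 <= R0 ->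
  exists K : nat, forall m, (K <= m)%nat ->
    4 ^ (N * (m + 1)) * coef eps m * exp (2 ^ m * R0) <= 4 ^ N * (/ 2) ^ m.
Proof.
  intro HR.
  set (A := 2 * 4 ^ N).
  assert (HA : 2 <= A) by (unfold A; assert (1 <= 4 ^ N) by (apply pow_R1_Rle; lra); lra).
  assert (HL : 0 <= ln A) by (rewrite <- ln_1; left; apply ln_increasing; lra).
  destruct (coef_exponent_bound (ln A) R0 HL HR) as [K HK].
  exists K. intros m Hm.
  assert (Hc : coef eps m <= / A ^ m * / exp (2 ^ m * R0)).
  { rewrite <- exp_Ropp, <- (exp_ln A), <- exp_INR_mult, <- exp_Ropp, <- exp_plus by lra.
    apply exp_le_mono. specialize (HK m Hm). lra. }
  assert (HAe : A ^ m = (4 ^ N) ^ m * 2 ^ m) by (unfold A; rewrite Rpow_mult_distr; ring).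
  replace (4 ^ (N * (m + 1))) with (4 ^ N * (4 ^ N) ^ m)
    by (rewrite <- pow_mult, <- pow_add; f_equal; lia).
  assert (0 < exp (2 ^ m * R0)) by apply exp_pos.
  assert (0 < (4 ^ N) ^ m) by (apply pow_lt, pow_lt; lra).
  assert (0 < 2 ^ m) by (apply pow_lt; lra).
  assert (0 < 4 ^ N) by (apply pow_lt; lra).
  apply Rle_trans with (4 ^ N * (4 ^ N) ^ m * (/ A ^ m * / exp (2 ^ m * R0)) * exp (2 ^ m * R0)).
  - apply Rmult_le_compat_r; [lra|]. apply Rmult_le_compat_l; [nra | exact Hc].
  - right. rewrite HAe, pow_inv. field. lra.
Qed.

Lemma admissible_majorant_summable (N : nat) (R0 : R) : 0 <= R0 ->
  ex_series (fun k => 4 ^ (N * (k + 1)) * coef eps k * exp (2 ^ k * R0)).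
Proof.
  intro HR. destruct (coef_decay N R0 HR) as [K HK].
  apply (proj2 (ex_series_incr_n _ K)).
  apply (ex_series_Rle _ (fun k => 4 ^ N * (/ 2) ^ (K + k))).
  - intro k. rewrite Rabs_pos_eq by (apply Rmult_le_pos; [apply Rmult_le_pos|];
      [apply pow_le; lra | left; apply exp_pos | left; apply exp_pos]).
    apply HK. lia.
  - apply (ex_series_ext (fun k => (4 ^ N * (/ 2) ^ K) * (/ 2) ^ k));
      [intro k; rewrite pow_add; apply Rmult_assoc|].
    apply ex_series_Rscal, ex_series_geom. rewrite Rabs_pos_eq; lra.
Qed.

Lemma admissible_coef : admissible (coef eps).
Proof.
  exists 0%nat. intro k. simpl. rewrite Rmult_1_l, Rabs_pos_eq; [lra | left; apply exp_pos].
Qed.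

Lemma admissible_mul (C f : nat -> R) :
  admissible C -> (forall k, Rabs (f k) <= 4 ^ (k + 1)) -> admissible (fun k => C k * f k).
Proof.
  intros [N HN] Hf. exists (S N). intro k.
  rewrite Rabs_mult.
  replace (S N * (k + 1))%nat with (N * (k + 1) + (k + 1))%nat by lia.
  rewrite pow_add.
  replace (4 ^ (N * (k + 1)) * 4 ^ (k + 1) * coef eps k)
    with ((4 ^ (N * (k + 1)) * coef eps k) * 4 ^ (k + 1)) by ring.
  apply Rmult_le_compat; auto; apply Rabs_pos.
Qed.

Lemma admissible_dx (C : nat -> R) : admissible C -> admissible (coef_dx C).
Proof.
  intro H. apply admissible_mul; auto. intro k.
  rewrite Rabs_Ropp, Rabs_mult, Rabs_pos_eq, Rabs_pos_eq by (apply pow_le; lra) || apply sqrt_pos.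
  rewrite pow_add, pow_1.
  assert (sqrt 2 <= 2) by (rewrite <- (sqrt_square 2) at 2 by lra; apply sqrt_le_1; lra).
  assert (2 ^ k <= 4 ^ k) by (apply pow_incr; lra).
  assert (0 <= 2 ^ k) by (apply pow_le; lra).
  assert (0 <= sqrt 2) by apply sqrt_pos.
  nra.
Qed.

Lemma admissible_dt (C : nat -> R) : admissible C -> admissible (coef_dt C).
Proof.
  intro H. apply admissible_mul; auto. intro k.
  rewrite Rabs_pos_eq by (apply pow_le; lra).
  rewrite !pow_add, pow_mult, !pow_1. replace (2 ^ 2) with 4 by ring.
  assert (0 <= 4 ^ k) by (apply pow_le; lra). lra.
Qed.

Lemma admissible_majorant (C : nat -> R) (R0 : R) : admissible C -> 0 <= R0 ->
  exists M : nat -> R, ex_series M /\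
    forall k ph x t, Rabs x <= R0 -> Rabs (wave C ph (S k) x t) <= M k.
Proof.
  intros [N HN] HR.
  exists (fun k => 4 ^ (N * (S k + 1)) * coef eps (S k) * exp (2 ^ (S k) * R0)).
  split.
  - apply (ex_series_incr_1 (fun k => 4 ^ (N * (k + 1)) * coef eps k * exp (2 ^ k * R0))).
    apply admissible_majorant_summable; auto.
  - intros k ph x t Hx. eapply Rle_trans; [apply wave_bound, Hx|].
    apply Rmult_le_compat_r; [left; apply exp_pos | apply HN].
Qed.

Lemma wave_series_ex (C : nat -> R) (ph x t : R) :
  admissible C -> ex_series (fun n => wave C ph (S n) x t).
Proof.
  intro HC. destruct (admissible_majorant C (Rabs x) HC (Rabs_pos x)) as [M [HM1 HM2]].
  apply (ex_series_Rle _ M); auto. intro n. apply HM2. lra.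
Qed.

Lemma wave_series_bound (C : nat -> R) (R0 : R) : admissible C -> 0 <= R0 ->
  exists B, forall ph x t, Rabs x <= R0 -> Rabs (wave_series C ph x t) <= B.
Proof.
  intros HC HR. destruct (admissible_majorant C R0 HC HR) as [M [HM1 HM2]].
  exists (Series M). intros ph x t Hx. apply Series_abs_le; auto.
Qed.

Lemma wave_series_dx (C : nat -> R) (ph x t : R) : admissible C ->
  derivable_pt_lim (fun y => wave_series C ph y t) x (wave_series (coef_dx C) (ph + PI / 4) x t).
Proof.
  intro HC.
  assert (HR : 0 <= Rabs x + 1) by (assert (0 <= Rabs x) by apply Rabs_pos; lra).
  destruct (admissible_majorant (coef_dx C) (Rabs x + 1) (admissible_dx C HC) HR)
    as [M [HM1 HM2]].
  apply (series_deriv (fun k y => wave C ph (S k) y t)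
           (fun k y => wave (coef_dx C) (ph + PI / 4) (S k) y t) M x 1); auto; [lra | | |].
  - intros k y _. apply wave_dx.
  - intros k y Hy. apply HM2.
    assert (Rabs y <= Rabs x + Rabs (y - x))
      by (replace y with (x + (y - x)) at 1 by ring; apply Rabs_triang).
    lra.
  - intros y _. apply wave_series_ex, HC.
Qed.

Lemma wave_series_dt (C : nat -> R) (ph x t : R) : admissible C ->
  derivable_pt_lim (fun s => wave_series C ph x s) t (wave_series (coef_dt C) (ph + PI / 2) x t).
Proof.
  intro HC.
  destruct (admissible_majorant (coef_dt C) (Rabs x) (admissible_dt C HC) (Rabs_pos x))
    as [M [HM1 HM2]].
  apply (series_deriv (fun k s => wave C ph (S k) x s)
           (fun k s => wave (coef_dt C) (ph + PI / 2) (S k) x s) M t 1); auto; [lra | | |].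
  - intros k y _. apply wave_dt.
  - intros k y _. apply HM2. lra.
  - intros y _. apply wave_series_ex, HC.
Qed.

(** Admissible wave series are jointly continuous, their partial derivatives
    being again (locally bounded) admissible wave series. *)
Lemma wave_series_cont (C : nat -> R) (ph x t : R) : admissible C ->
  continuous (fun p : R * R => wave_series C ph (fst p) (snd p)) (x, t).
Proof.
  intro HC.
  assert (HR : 0 <= Rabs x + 1) by (assert (0 <= Rabs x) by apply Rabs_pos; lra).
  destruct (wave_series_bound (coef_dx C) (Rabs x + 1) (admissible_dx C HC) HR) as [B1 HB1].
  destruct (wave_series_bound (coef_dt C) (Rabs x + 1) (admissible_dt C HC) HR) as [B2 HB2].
  apply (continuous_of_bounded_partials _ (wave_series (coef_dx C) (ph + PI / 4))
           (wave_series (coef_dt C) (ph + PI / 2)) x t B1 B2).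
  - intros y s. apply wave_series_dx, HC.
  - intros y s. apply wave_series_dt, HC.
  - intros y s Hy. apply HB1.
    assert (Rabs y <= Rabs x + Rabs (y - x))
      by (replace y with (x + (y - x)) at 1 by ring; apply Rabs_triang).
    lra.
  - intro s. apply HB2. lra.
Qed.

Lemma dx_wave_series (C : nat -> R) (ph : R) : admissible C ->
  dx (wave_series C ph) = wave_series (coef_dx C) (ph + PI / 4).
Proof.
  intro HC. unfold dx. extensionality x. extensionality t.
  apply is_derive_unique, is_derive_Reals, wave_series_dx, HC.
Qed.

Lemma dt_wave_series (C : nat -> R) (ph : R) : admissible C ->
  dt (wave_series C ph) = wave_series (coef_dt C) (ph + PI / 2).
Proof.
  intro HC. unfold dt. extensionality x. extensionality t.
  apply is_derive_unique, is_derive_Reals, wave_series_dt, HC.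
Qed.

Lemma pderiv_wave_series (l : list bool) (C : nat -> R) (ph : R) : admissible C ->
  exists C' ph', admissible C' /\ pderiv l (wave_series C ph) = wave_series C' ph'.
Proof.
  intro HC. induction l as [|b l IH].
  - exists C, ph. auto.
  - destruct IH as [C' [ph' [HC' E]]]. simpl. rewrite E.
    destruct b.
    + exists (coef_dx C'), (ph' + PI / 4).
      split; [apply admissible_dx | apply dx_wave_series]; auto.
    + exists (coef_dt C'), (ph' + PI / 2).
      split; [apply admissible_dt | apply dt_wave_series]; auto.
Qed.

End AdmissibleAmplitudes.

(** * Smoothness and the heat equation *)

Lemma w_eps_smooth (eps : R) : 0 < eps -> smooth2 (w_eps eps).
Proof.
  intros He l. rewrite w_eps_wave_series.
  destruct (pderiv_wave_series eps He l (coef eps) 0 (admissible_coef eps)) as [C [ph [HC ->]]].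
  split; [|split]; intros x t.
  - eexists. apply is_derive_Reals, (wave_series_dx eps); auto.
  - eexists. apply is_derive_Reals, (wave_series_dt eps); auto.
  - apply (wave_series_cont eps); auto.
Qed.

(** The heat equation at the level of amplitudes: differentiating twice in
    [x] multiplies the [k]-th amplitude by [(-sqrt 2 2^k)^2 = 2^(2k+1)],
    exactly as one derivative in [t] does. *)
Lemma coef_dx_dx (C : nat -> R) : coef_dx (coef_dx C) = coef_dt C.
Proof.
  extensionality k. unfold coef_dx, coef_dt.
  replace (2 ^ (2 * k + 1)) with (2 * (2 ^ k * 2 ^ k))
    by (rewrite <- pow_add; replace (2 * k + 1)%nat with (S (k + k)) by lia; simpl; ring).
  transitivity (C k * (sqrt 2 * sqrt 2) * (2 ^ k * 2 ^ k)); [ring|].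
  rewrite sqrt_sqrt by lra. ring.
Qed.

Lemma w_eps_heat (eps : R) : 0 < eps ->
  forall x t, dt (w_eps eps) x t - dx (dx (w_eps eps)) x t = 0.
Proof.
  intros He x t. rewrite w_eps_wave_series.
  assert (Hc := admissible_coef eps).
  rewrite (dt_wave_series eps), (dx_wave_series eps), (dx_wave_series eps), coef_dx_dx
    by auto using admissible_dx.
  replace (0 + PI / 4 + PI / 4) with (0 + PI / 2) by field. apply Rminus_diag.
Qed.

(** * The growth bound *)

(** A Young-type splitting of the exponent [2^k |x|]: either [|x|] is small
    compared with [2^(eps k)] and the coefficient absorbs it, or [2^k] is
    small compared with [|x|^(1/eps)]. *)
Lemma young_split (eps : R) (k : nat) (x : R) : 0 < eps ->
  2 ^ k * Rabs x <=
  Rpower 2 ((1 + eps) * INR k) / 2 + Rpower 2 (1 / eps) * abspow x (1 + 1 / eps).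
Proof.
  intro He.
  set (P := abspow x (1 + 1 / eps)).
  assert (HP : 0 <= P) by (unfold P, abspow; destruct (Req_EM_T x 0); [lra | left; apply exp_pos]).
  assert (HA2 : 0 < Rpower 2 (1 / eps)) by apply exp_pos.
  assert (H2k : 0 < 2 ^ k) by (apply pow_lt; lra).
  rewrite Rpower2_split.
  destruct (Rle_dec (2 * Rabs x) (exp (eps * INR k * ln 2))) as [Hsmall|Hlarge].
  - assert (2 ^ k * (2 * Rabs x) <= 2 ^ k * exp (eps * INR k * ln 2))
      by (apply Rmult_le_compat_l; lra).
    assert (0 <= Rpower 2 (1 / eps) * P) by (apply Rmult_le_pos; lra).
    lra.
  - apply Rnot_le_lt in Hlarge.
    assert (Hu : 0 < Rabs x) by (assert (0 < exp (eps * INR k * ln 2)) by apply exp_pos; lra).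
    assert (HPe : P = exp ((1 + 1 / eps) * ln (Rabs x))).
    { unfold P, abspow. destruct (Req_EM_T x 0) as [E|]; [|reflexivity].
      rewrite E, Rabs_R0 in Hu; lra. }
    assert (Hl : eps * INR k * ln 2 < ln 2 + ln (Rabs x)).
    { rewrite <- ln_mult, <- (ln_exp (eps * INR k * ln 2)) by lra.
      apply ln_increasing; auto. apply exp_pos. }
    assert (Hl2 : INR k * ln 2 < (ln 2 + ln (Rabs x)) / eps)
      by (apply (Rmult_lt_reg_l eps); auto; field_simplify; lra).
    assert (2 ^ k * Rabs x < Rpower 2 (1 / eps) * P).
    { rewrite pow2_exp, HPe. unfold Rpower. rewrite <- (exp_ln (Rabs x)) at 1 by auto.
      rewrite <- !exp_plus. apply exp_increasing.
      replace (1 / eps * ln 2 + (1 + 1 / eps) * ln (Rabs x))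
        with ((ln 2 + ln (Rabs x)) / eps + ln (Rabs x)) by (field; lra).
      lra. }
    assert (0 <= 2 ^ k * exp (eps * INR k * ln 2))
      by (apply Rmult_le_pos; left; [auto | apply exp_pos]).
    lra.
Qed.

Lemma coef_growth_bound (eps : R) (k : nat) (x : R) : 0 < eps ->
  coef eps k * exp (2 ^ k * Rabs x) <=
  exp (- Rpower 2 ((1 + eps) * INR k) / 2) * exp (Rpower 2 (1 / eps) * abspow x (1 + 1 / eps)).
Proof.
  intro He. unfold coef. rewrite <- !exp_plus. apply exp_le_mono.
  assert (H := young_split eps k x He). lra.
Qed.

(** The exponents [-2^((1+eps)k)/2] decay at least linearly in [k]. *)
Lemma coef_half_summable (eps : R) : 0 < eps ->
  ex_series (fun n : nat => exp (- Rpower 2 ((1 + eps) * INR (S n)) / 2)).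
Proof.
  intro He.
  assert (Hl2 : 0 < ln 2) by (rewrite <- ln_1; apply ln_increasing; lra).
  apply (ex_series_Rle _ (fun n => exp (- / 2) ^ (S n))).
  - intro n. rewrite Rabs_pos_eq by (left; apply exp_pos).
    rewrite <- exp_INR_mult. apply exp_le_mono.
    assert (INR (S n) <= Rpower 2 ((1 + eps) * INR (S n))).
    { rewrite Rpower2_split. eapply Rle_trans; [apply pow2_ge_INR|].
      rewrite <- (Rmult_1_r (2 ^ S n)) at 1.
      apply Rmult_le_compat_l; [left; apply pow_lt; lra|].
      rewrite <- exp_0. apply exp_le_mono.
      assert (0 < INR (S n)) by (apply lt_0_INR; lia).
      apply Rmult_le_pos; [apply Rmult_le_pos|]; lra. }
    lra.
  - apply (ex_series_incr_1 (fun n => exp (- / 2) ^ n)), ex_series_geom.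
    rewrite Rabs_pos_eq by (left; apply exp_pos).
    rewrite <- exp_0. apply exp_increasing. lra.
Qed.

Lemma w_eps_growth (eps : R) : 0 < eps ->
  exists A1 A2 : R, 0 < A1 /\ 0 < A2 /\
    forall x t : R, Rabs (w_eps eps x t) * exp (- A2 * abspow x (1 + 1 / eps)) <= A1.
Proof.
  intro He.
  set (E := fun n : nat => exp (- Rpower 2 ((1 + eps) * INR (S n)) / 2)).
  assert (HE : ex_series E) by apply (coef_half_summable eps He).
  set (A2 := Rpower 2 (1 / eps)).
  exists (Rabs (Series E) + 1), A2.
  split; [assert (0 <= Rabs (Series E)) by apply Rabs_pos; lra|].
  split; [apply exp_pos|].
  intros x t. set (G := exp (A2 * abspow x (1 + 1 / eps))).
  assert (Hb : Rabs (w_eps eps x t) <= G * Series E).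
  { rewrite w_eps_wave_series, <- Series_scal_l. apply Series_abs_le.
    - intro k. eapply Rle_trans; [apply (wave_bound _ _ _ _ _ (Rabs x)); lra|].
      rewrite Rabs_pos_eq by (left; apply exp_pos). rewrite (Rmult_comm G).
      apply coef_growth_bound, He.
    - apply ex_series_Rscal, HE. }
  assert (HG : G * exp (- A2 * abspow x (1 + 1 / eps)) = 1).
  { unfold G. rewrite <- exp_plus, <- exp_0. f_equal. ring. }
  assert (0 < exp (- A2 * abspow x (1 + 1 / eps))) by apply exp_pos.
  assert (Series E <= Rabs (Series E)) by apply Rle_abs.
  apply Rle_trans with (G * Series E * exp (- A2 * abspow x (1 + 1 / eps)));
    [apply Rmult_le_compat_r; lra|].
  replace (G * Series E * exp (- A2 * abspow x (1 + 1 / eps)))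
    with (Series E * (G * exp (- A2 * abspow x (1 + 1 / eps)))) by ring.
  rewrite HG. lra.
Qed.

(** * Nowhere analyticity in time *)

Definition coef_dtn (eps : R) (n : nat) : nat -> R :=
  fun k => coef eps k * (2 ^ (2 * k + 1)) ^ n.

Lemma coef_dtn_S (eps : R) (n : nat) : coef_dtn eps (S n) = coef_dt (coef_dtn eps n).
Proof. extensionality k. unfold coef_dtn, coef_dt. simpl pow. ring. Qed.

Lemma admissible_coef_dtn (eps : R) (n : nat) : admissible eps (coef_dtn eps n).
Proof.
  induction n as [|n IH].
  - replace (coef_dtn eps 0) with (coef eps)
      by (extensionality k; unfold coef_dtn; simpl; ring).
    apply admissible_coef.
  - rewrite coef_dtn_S. apply admissible_dt, IH.
Qed.

Lemma time_derivatives (eps x0 : R) : 0 < eps -> forall n t,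
  Derive_n (fun s => w_eps eps x0 s) n t = wave_series (coef_dtn eps n) (INR n * (PI / 2)) x0 t.
Proof.
  intros He n. induction n as [|n IH]; intro t.
  - simpl. rewrite w_eps_wave_series, Rmult_0_l.
    replace (coef_dtn eps 0) with (coef eps)
      by (extensionality k; unfold coef_dtn; simpl; ring).
    reflexivity.
  - simpl Derive_n.
    replace (Derive_n (fun s => w_eps eps x0 s) n)
      with (fun s => wave_series (coef_dtn eps n) (INR n * (PI / 2)) x0 s)
      by (extensionality s; symmetry; apply IH).
    rewrite coef_dtn_S, S_INR, Rmult_plus_distr_r, Rmult_1_l.
    apply is_derive_unique, is_derive_Reals, (wave_series_dt eps); auto.
    apply admissible_coef_dtn.
Qed.

Lemma wave_half_period (C : nat -> R) (ph x0 t : R) (K : nat) :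
  wave C ph K x0 (t + PI / 2 ^ (2 * K + 1)) = - wave C ph K x0 t.
Proof.
  assert (Hb : 2 ^ (2 * K + 1) * (PI / 2 ^ (2 * K + 1)) = PI)
    by (field; apply pow_nonzero; lra).
  unfold wave.
  replace (2 ^ (2 * K + 1) * (t + PI / 2 ^ (2 * K + 1)) - 2 ^ K * x0 + ph)
    with ((2 ^ (2 * K + 1) * t - 2 ^ K * x0 + ph) + PI)
    by (rewrite Rmult_plus_distr_l, Hb; ring).
  rewrite neg_sin. ring.
Qed.

(** The same shift leaves every higher wave unchanged: it is an even number
    of half periods [pi / 2^(2j+1)] for [j > K]. *)
Lemma wave_full_periods (C : nat -> R) (ph x0 t : R) (K k : nat) :
  wave C ph (K + S k) x0 (t + PI / 2 ^ (2 * K + 1)) = wave C ph (K + S k) x0 t.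
Proof.
  set (j := (K + S k)%nat).
  assert (Hb : 2 ^ (2 * j + 1) * (PI / 2 ^ (2 * K + 1)) = 2 * INR (2 * 4 ^ k) * PI).
  { replace (2 * j + 1)%nat with (2 * K + 1 + 2 * S k)%nat by (unfold j; lia).
    rewrite pow_add, pow_mult, <- tech_pow_Rmult, mult_INR, pow_INR.
    replace (INR 4) with (2 ^ 2) by (simpl; ring). simpl INR.
    field. apply pow_nonzero; lra. }
  unfold wave.
  replace (2 ^ (2 * j + 1) * (t + PI / 2 ^ (2 * K + 1)) - 2 ^ j * x0 + ph)
    with ((2 ^ (2 * j + 1) * t - 2 ^ j * x0 + ph) + 2 * INR (2 * 4 ^ k) * PI)
    by (rewrite Rmult_plus_distr_l, Hb; ring).
  rewrite sin_period. reflexivity.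
Qed.

Lemma half_period_difference (eps : R) (C : nat -> R) (ph x0 t : R) (L : nat) :
  0 < eps -> admissible eps C ->
  let K := S (S L) in
  let dl := PI / 2 ^ (2 * K + 1) in
  wave_series C ph x0 t - wave_series C ph x0 (t + dl) =
  sum_f_R0 (fun m => wave C ph (S m) x0 t - wave C ph (S m) x0 (t + dl)) L
  + 2 * wave C ph K x0 t.
Proof.
  intros He HC K dl.
  assert (Hex := fun s => wave_series_ex eps He C ph x0 s HC).
  unfold wave_series. rewrite <- Series_minus by auto.
  rewrite (Series_incr_n _ (S (S L))) by (try lia; apply (@ex_series_minus R_AbsRing); auto).
  rewrite (Series_ext _ (fun _ => 0 * 0)), (Series_scal_l 0), Rmult_0_l, Rplus_0_r.
  - simpl pred. simpl sum_f_R0 at 1. f_equal. fold K.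
    unfold dl. rewrite wave_half_period. ring.
  - intro k. rewrite Rmult_0_l.
    replace (S (S (S L) + k)) with (K + S k)%nat by (unfold K; lia).
    unfold dl. rewrite wave_full_periods. apply Rminus_diag.
Qed.

Lemma low_frequency_bound (eps x0 : R) (n L : nat) (t dl ph : R) : 0 < eps ->
  Rabs (sum_f_R0 (fun m => wave (coef_dtn eps n) ph (S m) x0 t
                           - wave (coef_dtn eps n) ph (S m) x0 (t + dl)) L)
  <= 2 * INR (S L) * exp (Rpower 2 (1 / eps) * abspow x0 (1 + 1 / eps))
       * (2 ^ (2 * S L + 1)) ^ n.
Proof.
  intro He. set (G := exp (Rpower 2 (1 / eps) * abspow x0 (1 + 1 / eps))).
  eapply Rle_trans; [apply sum_f_R0_triangle|].
  eapply Rle_trans; [apply (sum_Rle _ (fun _ => 2 * G * (2 ^ (2 * S L + 1)) ^ n))|].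
  2:{ rewrite sum_cte. right; ring. }
  intros m Hm.
  assert (HT : forall s, Rabs (wave (coef_dtn eps n) ph (S m) x0 s) <= G * (2 ^ (2 * S L + 1)) ^ n).
  { intro s. eapply Rle_trans; [apply (wave_bound _ _ _ _ _ (Rabs x0)); lra|].
    unfold coef_dtn.
    rewrite Rabs_mult, Rabs_pos_eq, Rabs_pos_eq by (left; apply exp_pos || apply pow_lt, pow_lt; lra).
    replace (coef eps (S m) * (2 ^ (2 * S m + 1)) ^ n * exp (2 ^ S m * Rabs x0))
      with ((coef eps (S m) * exp (2 ^ S m * Rabs x0)) * (2 ^ (2 * S m + 1)) ^ n) by ring.
    apply Rmult_le_compat.
    - apply Rmult_le_pos; left; apply exp_pos.
    - apply pow_le, pow_le; lra.
    - eapply Rle_trans; [apply coef_growth_bound, He|].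
      apply Rle_trans with (1 * G); [|lra].
      apply Rmult_le_compat_r; [left; apply exp_pos|].
      apply Rle_trans with (exp 0); [apply exp_le_mono | right; apply exp_0].
      assert (0 < Rpower 2 ((1 + eps) * INR (S m))) by apply exp_pos. lra.
    - apply pow_incr. split; [apply pow_le; lra | apply Rle_pow; [lra | lia]]. }
  unfold Rminus. eapply Rle_trans; [apply Rabs_triang|]. rewrite Rabs_Ropp.
  assert (H1 := HT t). assert (H2 := HT (t + dl)). lra.
Qed.

Lemma dominant_wave_lower (eps x0 : R) (n K : nat) (t ph : R) :
  1 / 2 <= Rabs (sin (2 ^ (2 * K + 1) * t - 2 ^ K * x0 + ph)) ->
  exp (- (Rpower 2 ((1 + eps) * INR K) + 2 ^ K * Rabs x0)) * (2 ^ (2 * K + 1)) ^ n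
  <= Rabs (2 * wave (coef_dtn eps n) ph K x0 t).
Proof.
  intro Hs. unfold wave, coef_dtn, coef.
  set (b := 2 ^ (2 * K + 1)) in *.
  set (sn := sin (b * t - 2 ^ K * x0 + ph)) in *.
  set (Rp := Rpower 2 ((1 + eps) * INR K)).
  assert (Hb : 0 < b ^ n) by (apply pow_lt, pow_lt; lra).
  assert (Hle : exp (- (Rp + 2 ^ K * Rabs x0)) <= exp (- Rp) * exp (- 2 ^ K * x0)).
  { rewrite <- exp_plus. apply exp_le_mono.
    assert (0 < 2 ^ K) by (apply pow_lt; lra).
    assert (x0 <= Rabs x0) by apply Rle_abs.
    nra. }
  rewrite !Rabs_mult, (Rabs_pos_eq 2), (Rabs_pos_eq (b ^ n)), !(Rabs_pos_eq (exp _))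
    by (lra || (left; apply exp_pos)).
  replace (2 * (exp (- Rp) * b ^ n * exp (- 2 ^ K * x0) * Rabs sn))
    with ((exp (- Rp) * exp (- 2 ^ K * x0)) * b ^ n * (2 * Rabs sn)) by ring.
  rewrite <- (Rmult_1_r (exp (- (Rp + 2 ^ K * Rabs x0)) * b ^ n)).
  assert (0 < exp (- (Rp + 2 ^ K * Rabs x0))) by apply exp_pos.
  apply Rmult_le_compat; [nra | lra | apply Rmult_le_compat_r; lra | lra].
Qed.

(** Choosing the frequency: since [eps < 1], the ratio [4^K / 2^((1+eps)K)]
    of the squared frequency to the decay exponent grows without bound. *)
Lemma frequency_choice (eps rho Z : R) : eps < 1 -> 0 < rho ->
  exists L : nat,
    9 * Z <= rho * exp ((1 - eps) * INR (S (S L)) * ln 2) /\ 12 <= INR (S (S L)) * rho.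
Proof.
  intros He1 Hr.
  assert (Hl2 : / 2 < ln 2) by apply ln_lt_2.
  destruct (INR_archimed (rho * (1 - eps) * ln 2) (9 * Z)) as [K1 HK1];
    [apply Rmult_lt_0_compat; [apply Rmult_lt_0_compat|]; lra|].
  destruct (INR_archimed rho 12) as [K2 HK2]; [lra|].
  exists (K1 + K2)%nat. set (K := S (S (K1 + K2))).
  assert (HK1' : INR K1 <= INR K) by (apply le_INR; unfold K; lia).
  assert (HK2' : INR K2 <= INR K) by (apply le_INR; unfold K; lia).
  split; [|nra].
  assert (H := exp_ineq1_le ((1 - eps) * INR K * ln 2)).
  assert (rho * (1 - eps) * ln 2 * INR K1 <= rho * (1 - eps) * ln 2 * INR K)
    by (apply Rmult_le_compat_l; [left; apply Rmult_lt_0_compat; [apply Rmult_lt_0_compat|] |]; lra).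
  assert (0 <= (1 - eps) * INR K * ln 2)
    by (apply Rmult_le_pos; [apply Rmult_le_pos|]; try lra; apply pos_INR).
  nra.
Qed.

Lemma frequency_budget (eps rho c0 x0 : R) (K n : nat) : 0 < eps -> 0 <= c0 ->
  9 * (Rabs x0 + c0 + 3) <= rho * exp ((1 - eps) * INR K * ln 2) ->
  INR n <= Rpower 2 ((1 + eps) * INR K) + 2 ^ K * Rabs x0 + INR K + c0 + 1 ->
  18 * INR n <= rho * 2 ^ (2 * K + 1).
Proof.
  intros He Hc0 HZ Hn.
  set (EK := exp (eps * INR K * ln 2)).
  assert (Hl2 : 0 < ln 2) by (rewrite <- ln_1; apply ln_increasing; lra).
  assert (HEK : 1 <= EK).
  { unfold EK. rewrite <- exp_0. apply exp_le_mono.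
    apply Rmult_le_pos; [apply Rmult_le_pos|]; try lra; apply pos_INR. }
  assert (H2K : 1 <= 2 ^ K) by (apply pow_R1_Rle; lra).
  assert (HKpow : INR K <= 2 ^ K) by apply pow2_ge_INR.
  assert (Hsplit : 2 ^ K = EK * exp ((1 - eps) * INR K * ln 2))
    by (unfold EK; rewrite <- exp_plus, pow2_exp; f_equal; ring).
  rewrite Rpower2_split in Hn. fold EK in Hn.
  assert (Hx : 0 <= Rabs x0) by apply Rabs_pos.
  assert (Hnz : INR n <= 2 ^ K * EK * (Rabs x0 + c0 + 3)).
  { assert (2 ^ K * Rabs x0 <= 2 ^ K * EK * Rabs x0)
      by (rewrite <- (Rmult_1_r (2 ^ K)) at 1; apply Rmult_le_compat_r; nra).
    assert (c0 <= 2 ^ K * EK * c0)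
      by (rewrite <- (Rmult_1_l c0) at 1; apply Rmult_le_compat_r; nra).
    nra. }
  replace (2 ^ (2 * K + 1)) with (2 * (2 ^ K * 2 ^ K))
    by (rewrite <- pow_add; replace (2 * K + 1)%nat with (S (K + K)) by lia; simpl; ring).
  assert (2 ^ K * EK * (9 * (Rabs x0 + c0 + 3))
          <= 2 ^ K * EK * (rho * exp ((1 - eps) * INR K * ln 2)))
    by (apply Rmult_le_compat_l; nra).
  rewrite Hsplit at 2. nra.
Qed.

(** For [K rho >= 12], a quarter plus a half period of the [K]-th wave fit
    in the interval [[t0, t0 + rho/4]] of the Cauchy estimates. *)
Lemma half_period_window (rho : R) (K : nat) : 0 < rho -> 12 <= INR K * rho ->
  PI / (2 * 2 ^ (2 * K + 1)) + PI / 2 ^ (2 * K + 1) <= rho / 4.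
Proof.
  intros Hr H12. set (b := 2 ^ (2 * K + 1)).
  assert (HPI := PI_RGT_0). assert (HPI4 := PI_4).
  assert (Hb0 : 0 < b) by (apply pow_lt; lra).
  assert (HbK : 2 * INR K <= b).
  { unfold b. rewrite pow_add, pow_mult. replace (2 ^ 2) with 4 by ring.
    assert (INR K <= 4 ^ K) by (eapply Rle_trans; [apply pow2_ge_INR | apply pow_incr; lra]).
    lra. }
  replace (PI / (2 * b) + PI / b) with (3 * PI / (2 * b)) by (field; lra).
  apply (Rmult_le_reg_r (2 * b)); [lra|].
  replace (3 * PI / (2 * b) * (2 * b)) with (3 * PI) by (field; lra).
  assert (rho * (2 * INR K) <= rho * b) by (apply Rmult_le_compat_l; lra).
  lra.
Qed.

Lemma geometric_gap (a q b y : R) (n : nat) : 0 < q -> 0 < b ->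
  a * exp y < q ^ n -> a * (b / q) ^ n < exp (- y) * b ^ n.
Proof.
  intros Hq Hb H.
  assert (0 < q ^ n) by (apply pow_lt; lra). assert (0 < b ^ n) by (apply pow_lt; lra).
  assert (0 < exp y) by apply exp_pos.
  assert (HQ : exp (- y) * exp y = 1) by (rewrite <- exp_plus, <- exp_0; f_equal; ring).
  unfold Rdiv. rewrite Rpow_mult_distr, pow_inv.
  apply (Rmult_lt_reg_r (q ^ n * exp y)); [apply Rmult_lt_0_compat; lra|].
  replace (a * (b ^ n * / q ^ n) * (q ^ n * exp y)) with (a * exp y * b ^ n) by (field; lra).
  replace (exp (- y) * b ^ n * (q ^ n * exp y)) with (q ^ n * b ^ n * (exp (- y) * exp y))
    by ring.
  rewrite HQ, Rmult_1_r. apply Rmult_lt_compat_r; auto.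
Qed.

Lemma derivative_bounds_incompatible (y b G M rho c0 : R) (K n : nat) :
  0 <= y -> 0 < b -> 0 < G -> 0 <= M -> 0 < rho ->
  4 * G <= exp c0 -> 8 * (M + 1) <= exp c0 ->
  y + INR K + c0 <= INR n -> 18 * INR n <= rho * b ->
  exp (- y) * b ^ n <= 4 * M * INR (fact n) * (2 / rho) ^ n + 2 * INR K * G * (b / 4) ^ n ->
  False.
Proof.
  intros Hy Hb HG HM Hr Hc1 Hc2 Hn H18 Hmain.
  assert (He1 := exp_le_3).
  assert (HK : INR K < exp (INR K)) by (assert (H := exp_ineq1_le (INR K)); lra).
  assert (HK0 : 0 <= INR K) by apply pos_INR.
  assert (Hn4 : exp (INR n) <= 4 ^ n)
    by (rewrite <- (Rmult_1_r (INR n)), exp_INR_mult; apply pow_incr; split; [left; apply exp_pos | lra]).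
  assert (Hn9 : exp (2 * INR n) <= 9 ^ n).
  { rewrite Rmult_comm, exp_INR_mult. apply pow_incr. split; [left; apply exp_pos|].
    replace 2 with (1 + 1) by ring. rewrite exp_plus. assert (0 < exp 1) by apply exp_pos. nra. }
  assert (Hey : 0 < exp y) by apply exp_pos.
  assert (HeK : 0 < exp (INR K)) by apply exp_pos.
  (* the lower waves: [4 K G e^y < e^(y + K + c0) <= e^n <= 4^n] *)
  assert (T1 : 4 * INR K * G * (b / 4) ^ n < exp (- y) * b ^ n).
  { apply (geometric_gap (4 * INR K * G) 4); [lra | lra |].
    apply Rlt_le_trans with (exp (INR K) * exp c0 * exp y).
    - apply Rmult_lt_compat_r; [lra|].
      apply Rle_lt_trans with (INR K * exp c0); 
        [replace (4 * INR K * G) with (INR K * (4 * G)) by ring; apply Rmult_le_compat_l; lra|].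
      apply Rmult_lt_compat_r; [apply exp_pos | lra].
    - rewrite <- !exp_plus. eapply Rle_trans; [apply exp_le_mono|exact Hn4]. lra. }
  (* the Cauchy estimate: [n! (2/rho)^n <= (2n/rho)^n <= (b/9)^n] *)
  assert (T2 : INR (fact n) * (2 / rho) ^ n <= (b / 9) ^ n).
  { apply Rle_trans with (INR n ^ n * (2 / rho) ^ n).
    - apply Rmult_le_compat_r; [apply pow_le; apply Rdiv_le_0_compat; lra | apply fact_le_pow].
    - rewrite <- Rpow_mult_distr. apply pow_incr. split.
      + apply Rmult_le_pos; [apply pos_INR | apply Rdiv_le_0_compat; lra].
      + apply (Rmult_le_reg_r (9 * rho)); [lra|].
        replace (INR n * (2 / rho) * (9 * rho)) with (18 * INR n) by (field; lra).
        replace (b / 9 * (9 * rho)) with (rho * b) by field. exact H18. }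
  (* [8 M e^y < e^(c0 + y) <= e^(2n) <= 9^n] *)
  assert (T3 : 8 * M * (b / 9) ^ n < exp (- y) * b ^ n).
  { apply (geometric_gap (8 * M) 9); [lra | lra |].
    apply Rlt_le_trans with (exp c0 * exp y); [apply Rmult_lt_compat_r; lra|].
    rewrite <- exp_plus. eapply Rle_trans; [apply exp_le_mono|exact Hn9].
    assert (0 <= INR n) by apply pos_INR. lra. }
  assert (4 * M * (INR (fact n) * (2 / rho) ^ n) <= 4 * M * (b / 9) ^ n)
    by (apply Rmult_le_compat_l; lra).
  lra.
Qed.

Lemma oscillation_lower_bound (eps x0 t0 : R) (n L : nat) : 0 < eps ->
  let K := S (S L) in
  let b := 2 ^ (2 * K + 1) in
  let G := exp (Rpower 2 (1 / eps) * abspow x0 (1 + 1 / eps)) in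
  exists t, t0 <= t <= t0 + PI / (2 * b) /\
    exp (- (Rpower 2 ((1 + eps) * INR K) + 2 ^ K * Rabs x0)) * b ^ n <=
    Rabs (Derive_n (fun s => w_eps eps x0 s) n t
          - Derive_n (fun s => w_eps eps x0 s) n (t + PI / b))
    + 2 * INR K * G * (b / 4) ^ n.
Proof.
  intros He K b G.
  set (ph := INR n * (PI / 2)).
  set (C := coef_dtn eps n).
  assert (Hb : 0 < b) by (apply pow_lt; lra).
  destruct (phase_point b (- 2 ^ K * x0 + ph) t0 Hb) as [t [Ht Hsin]].
  replace (b * t + (- 2 ^ K * x0 + ph)) with (b * t - 2 ^ K * x0 + ph) in Hsin by ring.
  exists t. split; [exact Ht|].
  rewrite !(time_derivatives eps x0 He). fold ph C.
  assert (Hid := half_period_difference eps C ph x0 t L He (admissible_coef_dtn eps n)).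
  assert (Hlow := low_frequency_bound eps x0 n L t (PI / b) ph He).
  assert (Hmain := dominant_wave_lower eps x0 n K t ph Hsin).
  cbv zeta in Hid. fold K b C in Hid, Hlow, Hmain. fold G in Hlow.
  (* the lower waves are at most those of frequency [b/4] *)
  assert (HbL : 2 ^ (2 * S L + 1) = b / 4).
  { unfold b, K. replace (2 * S (S L) + 1)%nat with (2 * S L + 1 + 2)%nat by lia.
    rewrite (pow_add 2 (2 * S L + 1) 2). field. }
  rewrite HbL in Hlow.
  assert (2 * INR (S L) * G * (b / 4) ^ n <= 2 * INR K * G * (b / 4) ^ n).
  { assert (0 <= (b / 4) ^ n) by (apply pow_le; lra).
    assert (INR (S L) <= INR K) by (apply le_INR; unfold K; lia).
    assert (0 < G) by apply exp_pos.
    apply Rmult_le_compat_r; [lra|]. apply Rmult_le_compat_r; lra. }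
  set (D := wave_series C ph x0 t - wave_series C ph x0 (t + PI / b)).
  set (Sl := sum_f_R0 (fun m => wave C ph (S m) x0 t - wave C ph (S m) x0 (t + PI / b)) L)
    in *.
  assert (Hw : 2 * wave C ph K x0 t = D - Sl) by (unfold D; rewrite Hid; ring).
  rewrite Hw in Hmain.
  assert (Rabs (D - Sl) <= Rabs D + Rabs Sl)
    by (unfold Rminus; eapply Rle_trans; [apply Rabs_triang | rewrite Rabs_Ropp; lra]).
  lra.
Qed.

Lemma le_exp_abs_ln (a c : R) : 0 < a -> 0 <= c -> a <= exp (Rabs (ln a) + c).
Proof.
  intros Ha Hc. rewrite <- (exp_ln a) at 1 by exact Ha. apply exp_le_mono.
  assert (ln a <= Rabs (ln a)) by apply Rle_abs. lra.
Qed.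

(** The time traces of [w_eps] are nowhere analytic: Cauchy estimates at
    [t0] would bound the oscillation of the [n]-th derivative by
    [4 M n! (2/rho)^n], while [oscillation_lower_bound], for a frequency
    [K] chosen by [frequency_choice] and [n] comparable to the decay
    exponent, forces a larger oscillation. *)
Lemma w_eps_not_analytic (eps : R) : 0 < eps < 1 ->
  forall x0 t0 : R, ~ real_analytic_at (fun t => w_eps eps x0 t) t0.
Proof.
  intros [He He1] x0 t0 Han.
  destruct (analytic_deriv_bound _ _ Han) as [rho [M [Hr [HM Hcauchy]]]].
  set (G := exp (Rpower 2 (1 / eps) * abspow x0 (1 + 1 / eps))).
  assert (HG : 0 < G) by apply exp_pos.
  set (c0 := Rabs (ln (4 * G)) + Rabs (ln (8 * (M + 1)))).
  assert (Hc0 : 0 <= c0) by (unfold c0; assert (H1 := Rabs_pos (ln (4 * G)));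
                             assert (H2 := Rabs_pos (ln (8 * (M + 1)))); lra).
  destruct (frequency_choice eps rho (Rabs x0 + c0 + 3) He1 Hr) as [L [HZ H12]].
  set (K := S (S L)) in *. set (b := 2 ^ (2 * K + 1)).
  set (y := Rpower 2 ((1 + eps) * INR K) + 2 ^ K * Rabs x0).
  assert (Hy : 0 <= y).
  { assert (0 < Rpower 2 ((1 + eps) * INR K)) by apply exp_pos.
    assert (0 < 2 ^ K) by (apply pow_lt; lra). assert (0 <= Rabs x0) by apply Rabs_pos.
    unfold y. nra. }
  destruct (nat_ceil (y + INR K + c0)) as [n [Hn1 Hn2]];
    [assert (0 <= INR K) by apply pos_INR; lra|].
  assert (H18 : 18 * INR n <= rho * b)
    by (apply (frequency_budget eps rho c0 x0); auto; unfold y in Hn2; lra).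
  destruct (oscillation_lower_bound eps x0 t0 n L He) as [t [Ht Hosc]].
  fold K b G y in Ht, Hosc.
  (* both [t] and [t + pi/b] lie in the range of the Cauchy estimates *)
  assert (Hrange := half_period_window rho K Hr H12). fold b in Hrange.
  assert (Hb : 0 < b) by (apply pow_lt; lra).
  assert (HPIb : 0 < PI / b) by (apply Rdiv_lt_0_compat; [apply PI_RGT_0 | lra]).
  assert (Hd1 := Hcauchy n t ltac:(rewrite Rabs_pos_eq; lra)).
  assert (Hd2 := Hcauchy n (t + PI / b) ltac:(rewrite Rabs_pos_eq; lra)).
  apply (derivative_bounds_incompatible y b G M rho c0 K n); auto.
  - apply le_exp_abs_ln; [lra | apply Rabs_pos].
  - unfold c0. rewrite (Rplus_comm (Rabs (ln (4 * G)))). apply le_exp_abs_ln; [lra | apply Rabs_pos].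
  - eapply Rle_trans; [exact Hosc|].
    assert (Rabs (Derive_n (fun s => w_eps eps x0 s) n t
                  - Derive_n (fun s => w_eps eps x0 s) n (t + PI / b))
            <= 4 * M * INR (fact n) * (2 / rho) ^ n).
    { unfold Rminus. eapply Rle_trans; [apply Rabs_triang|]. rewrite Rabs_Ropp. lra. }
    lra.
Qed.

Theorem theorem1p2 (eps : R) (Heps : 0 < eps < 1) :
  smooth2 (w_eps eps) /\
  (forall x t, dt (w_eps eps) x t - dx (dx (w_eps eps)) x t = 0) /\
  (forall x0 t0 : R, ~ real_analytic_at (fun t => w_eps eps x0 t) t0) /\
  (exists A1 A2 : R, 0 < A1 /\ 0 < A2 /\
     forall x t : R,
       Rabs (w_eps eps x t) * exp (- A2 * abspow x (1 + 1 / eps)) <= A1).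
Proof.
  destruct Heps as [He He1].
  split; [apply w_eps_smooth, He|].
  split; [apply w_eps_heat, He|].
  split; [apply w_eps_not_analytic; auto|].
  apply w_eps_growth, He.
Qed.
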